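(* Let $v\in C^1([0,T];C^1(\mathcal K^* ))$ and $B\in C([0,T];C^0(\mathcal K^* ))$ satisfy $\frac{dv}{dt}+I_v(\tilde D_1v)+\tilde D_0B=0$. Let $\gamma\in C^1([0,T];C_1)$ be a dual 1-chain that is materially advected, $\frac{d\gamma}{dt}=\mathcal L^{\rm chain}_{v(t)}\gamma$, and that is a cycle at time $0$, $\partial\gamma(0)=0$. Then the discrete circulation $\Gamma(t)=v(t)(\gamma(t))=\sum_j\gamma_j(t)v_j(t)$ is constant: $\frac{d\Gamma}{dt}=0$.
   Context: $C^k(\mathcal K^* )$ is the space of real dual $k$-cochains on a cell complex and $C_k$ the space of real dual $k$-chains (same dimension), with pairing $\alpha(\gamma)=\sum_j\alpha_j\gamma_j$. $\tilde D_0:C^0\to C^1$, $\tilde D_1:C^1\to C^2$ are dual coboundary (incidence) matrices with $\tilde D_1\tilde D_0=0$; the boundary $\partial:C_1\to C_0$ is $\partial=\tilde D_0^T$, so $(\tilde D_0\phi)(\gamma)=\phi(\partial\gamma)$. For each velocity $v$ there are linear maps $I_v:C^2\to C^1$ (the discrete contraction, the same one appearing in the momentum equation) and $I_v^{(1)}:C^1\to C^0$. The discrete Lie derivative is defined by Cartan's formula: on 1-cochains $\mathcal L_v\alpha=\tilde D_0(I_v^{(1)}\alpha)+I_v(\tilde D_1\alpha)$, on 0-cochains $\mathcal L_v\phi=I_v^{(1)}(\tilde D_0\phi)$. The chain Lie derivative $\mathcal L_v^{\rm chain}$ on $C_1$ and on $C_0$ is the adjoint of $\mathcal L_v$ with respect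 to the pairing: $\alpha(\mathcal L_v^{\rm chain}\gamma)=(\mathcal L_v\alpha)(\gamma)$ for all cochains $\alpha$ of the corresponding degree. *)

From HB Require Import structures.
From mathcomp Require Import all_boot all_order all_algebra.
From mathcomp Require Import all_classical all_reals all_analysis.
Set Implicit Arguments. Unset Strict Implicit. Unset Printing Implicit Defensive.
Import Order.TTheory GRing.Theory Num.Theory.
Import numFieldNormedType.Exports.
Local Open Scope classical_set_scope.
Local Open Scope ring_scope.

(* Dual k-cochains / dual k-chains on a complex with n_k dual k-cells are
   column vectors 'cV[R]_(n_k). *)

Definition pairing (R : pzRingType) (n : nat) (a g : 'cV[R]_n) : R :=
  \sum_(j < n) a j 0 * g j 0.

Definition tint (R : realType) (T : R) : set R := [set t | 0 <= t <= T].

(* f has derivative l at t relative to the set A (one-sided at endpoints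
   of an interval): difference quotients with t+h in A, h <> 0, tend to l. *)
Definition deriv_within (R : realType) (A : set R) (f : R -> R) (t l : R) : Prop :=
  (fun h : R => h^-1 * (f (t + h) - f t))
    @ within (fun h : R => A (t + h)) (dnbhs (0 : R)) --> l.

Definition C1_with_deriv (R : realType) (T : R) (f f' : R -> R) : Prop :=
  (forall t, tint T t -> deriv_within (tint T) f t (f' t)) /\
  {within tint T, continuous f'}.

Definition C1_vec_with_deriv (R : realType) (n : nat) (T : R)
  (f f' : R -> 'cV[R]_n) : Prop :=
  forall j : 'I_n, C1_with_deriv T (fun t => f t j 0) (fun t => f' t j 0).

Definition C0_vec (R : realType) (n : nat) (T : R) (f : R -> 'cV[R]_n) : Prop :=
  forall j : 'I_n, {within tint T, continuous (fun t => f t j 0)}.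

(* Discrete Lie derivative on 1-cochains via Cartan's formula:
   L_v alpha = D0 (I1_v alpha) + I_v (D1 alpha); as a matrix acting on C^1. *)
Definition lie1 (R : pzRingType) (n0 n1 n2 : nat)
  (D0 : 'M[R]_(n1, n0)) (D1 : 'M[R]_(n2, n1))
  (Iv : 'M[R]_(n1, n2)) (I1v : 'M[R]_(n0, n1)) : 'M[R]_n1 :=
  D0 *m I1v + Iv *m D1.

(* Chain Lie derivative on C_1: adjoint of lie1 w.r.t. the pairing, i.e.
   the transpose matrix (pairing is the standard dot product). *)
Definition lie1_chain (R : pzRingType) (n0 n1 n2 : nat)
  (D0 : 'M[R]_(n1, n0)) (D1 : 'M[R]_(n2, n1))
  (Iv : 'M[R]_(n1, n2)) (I1v : 'M[R]_(n0, n1)) : 'M[R]_n1 :=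
  (lie1 D0 D1 Iv I1v)^T.

Definition bdry (R : pzRingType) (n0 n1 : nat) (D0 : 'M[R]_(n1, n0))
  (g : 'cV[R]_n1) : 'cV[R]_n0 := D0^T *m g.

From HB Require Import structures.
From mathcomp Require Import all_boot all_order all_algebra.
From mathcomp Require Import all_classical all_reals all_analysis.
From mathcomp Require Import ring lra.
Import Order.TTheory GRing.Theory Num.Theory.
Import numFieldNormedType.Exports.
Local Open Scope classical_set_scope.
Local Open Scope ring_scope.
Set Implicit Arguments. Unset Strict Implicit. Unset Printing Implicit Defensive.

(* By the momentum equation and the adjointness of L_v^chain, dΓ/dt equals
   (D0 (I1_v v - B))(γ) = (I1_v v - B)(∂γ).  Since D1 D0 = 0, the boundary
   x = ∂γ obeys the linear equation dx/dt = (I1_v D0)^T x, whose coefficients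
   stay bounded on [0,T] because I1 is linear and v is continuous; Grönwall's
   inequality applied to |x|^2 then propagates ∂γ(0) = 0 to all times. *)

Section DerivWithin.
Variable R : realType.

Lemma near_within_dnbhs0P (P Q : R -> Prop) :
  (\forall h \near within P (dnbhs (0 : R)), Q h) <->
  exists2 d : R, 0 < d & forall h, h != 0 -> `|h| < d -> P h -> Q h.
Proof.
rewrite /dnbhs /within /=; split.
  move=> /nbhs_normP [d d0 H]; exists d => // h h0 hd Ph.
  by apply: (H h) => //=; rewrite sub0r normrN.
move=> [d d0 H]; apply/nbhs_normP; exists d => // h /= hd h0 Ph.
by apply: H => //; rewrite sub0r normrN in hd.
Qed.

Lemma difference_quotientE (f : R -> R) t :
  (fun h : R => h^-1 *: ((f \o shift t) (h *: 1) - f t))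
    = (fun h => h^-1 * (f (t + h) - f t)).
Proof. by apply/funext => h /=; rewrite -[h%:A]/(h * 1) mulr1 [h + t]addrC. Qed.

Variable A : set R.
Local Notation incr t := (within (fun h : R => A (t + h)) (dnbhs (0 : R))).
Implicit Types (f g : R -> R) (c t l : R).

Lemma near_incr_neq0 t : \forall h \near incr t, h != 0.
Proof. by apply/near_within_dnbhs0P; exists 1. Qed.

Lemma cvg_incr_id t : (fun h => h) @ incr t --> (0 : R).
Proof. by do 2 apply: cvg_within_filter; exact: cvg_id. Qed.

Lemma deriv_within_cvg_shift f t l :
  deriv_within A f t l -> (fun h => f (t + h)) @ incr t --> f t.
Proof.
move=> Hf.
have Hc : (fun h => f t + h * (h^-1 * (f (t + h) - f t))) @ incr t --> f t + 0 * l.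
  by apply: cvgD; [exact: cvg_cst | apply: cvgM; [exact: cvg_incr_id | exact: Hf]].
rewrite mul0r addr0 in Hc; apply: cvg_trans Hc; apply: near_eq_cvg.
near=> h; have h0 : h != 0 by near: h; exact: near_incr_neq0.
by rewrite mulrA mulfV // mul1r addrC subrK.
Unshelve. all: by end_near. Qed.

Lemma deriv_withinM f g t lf lg :
  deriv_within A f t lf -> deriv_within A g t lg ->
  deriv_within A (fun s => f s * g s) t (f t * lg + lf * g t).
Proof.
move=> Hf Hg.
have Hc : (fun h => f (t + h) * (h^-1 * (g (t + h) - g t))
                   + h^-1 * (f (t + h) - f t) * g t) @ incr t --> f t * lg + lf * g t.
  apply: cvgD; first by apply: cvgM; [exact: deriv_within_cvg_shift Hf | exact: Hg].
  by apply: cvgM; [exact: Hf | exact: cvg_cst].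
by apply: cvg_trans Hc; apply: near_eq_cvg; apply: nearW => h /=; ring.
Qed.

Lemma deriv_withinZ c f t l :
  deriv_within A f t l -> deriv_within A (fun s => c * f s) t (c * l).
Proof.
move=> Hf; apply: cvg_trans (cvgM (cvg_cst c) Hf).
by apply: near_eq_cvg; apply: nearW => h /=; ring.
Qed.

Lemma deriv_within_sum n (F : 'I_n -> R -> R) (dF : 'I_n -> R) t :
  (forall j, deriv_within A (F j) t (dF j)) ->
  deriv_within A (fun s => \sum_j F j s) t (\sum_j dF j).
Proof.
move=> HF; have := @cvg_big R 'I_n +%R 0 xpredT add_continuous _ (incr t)
  (index_enum 'I_n) (fun j h => h^-1 * (F j (t + h) - F j t)) dF.
move=> /(_ _ (fun j _ => HF j)); apply: cvg_trans; apply: near_eq_cvg; apply: nearW => h /=.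
by rewrite -sumrB mulr_sumr.
Qed.

Lemma deriv_within_continuous f t l :
  deriv_within A f t l -> f @ within A (nbhs t) --> f t.
Proof.
move=> /deriv_within_cvg_shift /cvgrPdist_lt Hs; apply/cvgrPdist_lt => e e0.
have [d d0 Hd] := (near_within_dnbhs0P _ _).1 (Hs e e0).
rewrite /within /=; apply/nbhs_normP; exists d => // s /= ts As.
have [->|st] := eqVneq s t; first by rewrite subrr normr0.
have := Hd (s - t); rewrite [t + (s - t)]addrC subrK; apply => //.
  by rewrite subr_eq0.
by rewrite distrC.
Qed.

Lemma deriv_within_is_derive f t l : (\forall h \near (0 : R), A (t + h)) ->
  deriv_within A f t l -> is_derive t 1 f l.
Proof.
move=> /nbhs_normP [d' d'0 Hd'] Hf.
have Hdn : (fun h => h^-1 * (f (t + h) - f t)) @ 0^' --> l.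
  apply: cvg_trans Hf => S; rewrite !nbhs_simpl /= => HS.
  have [d d0 Hd] := (near_within_dnbhs0P _ _).1 HS.
  rewrite /dnbhs /within /=; apply/nbhs_normP; exists (Num.min d d').
    by rewrite /= lt_min d0.
  move=> h /=; rewrite lt_min => /andP[h1 h2] h0; apply: Hd => //.
    by rewrite sub0r normrN in h1.
  exact: Hd'.
have Hc : (fun h : R => h^-1 *: ((f \o shift t) (h *: 1) - f t)) @ 0^' --> l.
  by rewrite difference_quotientE.
by apply: DeriveDef; [exact: (cvgP _ Hc) | exact: cvg_lim Hc].
Qed.

Lemma is_derive_deriv_within f t l : is_derive t 1 f l -> deriv_within A f t l.
Proof.
move=> Hd.
have Hc : (fun h : R => h^-1 *: ((f \o shift t) (h *: 1) - f t)) @ 0^' --> 'D_1 f t.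
  by case: Hd => d _; exact: d.
by rewrite derive_val difference_quotientE in Hc; apply: cvg_within_filter.
Qed.

End DerivWithin.

Lemma is_derive_expRM (R : realType) (c t : R) :
  is_derive t 1 (fun s : R => expR (c * s)) (expR (c * t) * c).
Proof.
have Hlin : is_derive t (1 : R) (fun s : R => c * s) c.
  by have := is_deriveZ c (is_derive_id t (1 : R)); rewrite [_ *: 1]mulr1.
exact: is_derive1_comp (is_derive_expR _) Hlin.
Qed.

Section Gronwall.
Variables (R : realType) (T : R).

Lemma tintE : tint T = [set` `[0, T]].
Proof. by apply/funext => s; rewrite /tint /= in_itv. Qed.

Lemma deriv_within_continuous_tint (f df : R -> R) :
  (forall s, tint T s -> deriv_within (tint T) f s (df s)) ->
  {within `[0, T], continuous f}.
Proof.
move=> Hf; apply/subspace_continuousP => s Ts.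
by rewrite -tintE in Ts *; exact: deriv_within_continuous (Hf s Ts).
Qed.

Lemma near_tint_interior s : 0 < s < T -> \forall h \near (0 : R), tint T (s + h).
Proof.
move=> /andP[s0 sT]; apply/nbhs_normP; exists (Num.min s (T - s)).
  by rewrite /= lt_min s0 subr_gt0.
move=> h /=; rewrite sub0r normrN lt_min !ltr_norml => /andP[/andP[? ?] /andP[? ?]].
by rewrite /tint /=; apply/andP; split; lra.
Qed.

Lemma gronwall_eq0 (c : R) (f df : R -> R) :
  (forall s, tint T s -> 0 <= f s) -> f 0 = 0 ->
  (forall s, tint T s -> deriv_within (tint T) f s (df s)) ->
  (forall s, tint T s -> df s <= c * f s) ->
  forall t, tint T t -> f t = 0.
Proof.
move=> f_ge0 f0 Hf Hdf t tt.
(* g = e^{-cs} f is nonincreasing, nonnegative and vanishes at 0. *)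
pose g s := expR (- c * s) * f s.
pose dg s := expR (- c * s) * df s + expR (- c * s) * (- c) * f s.
have Hg s : tint T s -> deriv_within (tint T) g s (dg s).
  by move=> Ts; exact: deriv_withinM (is_derive_deriv_within _ (is_derive_expRM _ _)) (Hf s Ts).
have dg_le0 s : tint T s -> dg s <= 0.
  move=> Ts; have -> : dg s = expR (- c * s) * (df s - c * f s) by rewrite /dg; ring.
  by rewrite mulr_ge0_le0 ?expR_ge0 // subr_le0 Hdf.
have on_interior s : s \in `]0, T[ -> tint T s /\ is_derive s 1 g (dg s).
  rewrite in_itv /= => s0T; have Ts : tint T s.
    by case/andP: s0T => ? ?; rewrite /tint /=; apply/andP; split; lra.
  by split; last exact: deriv_within_is_derive (near_tint_interior s0T) (Hg s Ts).
have /andP[t0 tT] := tt.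
have g_nincr : g t <= g 0.
  have T0 : 0 <= T := le_trans t0 tT.
  apply: (ler0_derive1_le_cc _ _ (deriv_within_continuous_tint Hg));
    rewrite ?in_itv /= ?lexx ?T0 ?t0 ?tT //.
  - by move=> s /on_interior [_ []].
  - move=> s /on_interior [Ts Hs]; rewrite derive1E.
    by case: Hs => _ ->; exact: dg_le0.
have gt_eq0 : g t = 0.
  have g00 : g 0 = 0 by rewrite /g f0 mulr0.
  have gt_ge0 : 0 <= g t by apply: mulr_ge0; [exact: expR_ge0 | exact: f_ge0].
  by apply: le_anti; rewrite gt_ge0 andbT -g00.
by move: gt_eq0 => /eqP; rewrite /g mulf_eq0 gt_eqF ?expR_gt0 //= => /eqP.
Qed.

Lemma continuous_bounded_tint (f : R -> R) : 0 <= T ->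
  {within `[0, T], continuous f} -> exists V, forall s, tint T s -> `|f s| <= V.
Proof.
move=> T0 cf; have [a _ Ha] := EVT_max T0 cf; have [b _ Hb] := EVT_min T0 cf.
exists (`|f a| + `|f b|) => s Ts; have sT : s \in `[0, T] by rewrite in_itv.
have := Ha s sT; have := Hb s sT.
have := ler_norm (f a); have : - f b <= `|f b| by rewrite -normrN ler_norm.
have := normr_ge0 (f a); have := normr_ge0 (f b).
by rewrite ler_norml => *; apply/andP; split; lra.
Qed.

End Gronwall.

Lemma bounded_fin_family (R : realDomainType) (I : finType) (P : set R) (F : I -> R -> R) :
  (forall i, exists b, forall s, P s -> `|F i s| <= b) ->
  exists b, forall i s, P s -> `|F i s| <= b.
Proof.
move=> /fin_all_exists [b Hb]; exists (\sum_i `|b i|) => i s Ps.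
apply: le_trans (Hb i s Ps) (le_trans (ler_norm (b i)) _).
by rewrite (bigD1 i) //= lerDl sumr_ge0.
Qed.

Lemma linear_delta_sum (R : pzRingType) n p q (J : 'cV[R]_n -> 'M[R]_(p, q)) :
  (forall a u w, J (a *: u + w) = a *: J u + J w) ->
  forall u, J u = \sum_(m < n) u m 0 *: J (delta_mx m 0).
Proof.
move=> J_lin.
have J0 : J 0 = 0.
  by apply: (addrI (J 0)); rewrite addr0 -{1}(scale1r (J 0)) -J_lin scaler0 addr0.
have JD : {morph J : u w / u + w}.
  by move=> u w; rewrite -[u in LHS]scale1r J_lin scale1r.
have JZ a u : J (a *: u) = a *: J u by rewrite -[_ *: u]addr0 J_lin J0 addr0.
move=> u; rewrite {1}(matrix_sum_delta u).
under eq_bigr do rewrite big_ord1.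
by rewrite (big_morph J JD J0); apply: eq_bigr => m _; exact: JZ.
Qed.

Lemma bounded_linear_image (R : realDomainType) n p q (J : 'cV[R]_n -> 'M[R]_(p, q))
    (P : set R) (u : R -> 'cV[R]_n) :
  (forall a u w, J (a *: u + w) = a *: J u + J w) ->
  (forall m, exists b, forall s, P s -> `|u s m 0| <= b) ->
  exists b, forall i k s, P s -> `|J (u s) i k| <= b.
Proof.
move=> J_lin /(bounded_fin_family (F := fun m s => u s m 0)) [b Hb].
have [c Hc] : exists c, forall (ik : 'I_p * 'I_q) s, P s -> `|J (u s) ik.1 ik.2| <= c.
  apply: bounded_fin_family => -[i k].
  exists (\sum_m b * `|J (delta_mx m 0) i k|) => s Ps /=.
  rewrite (linear_delta_sum J_lin) summxE; apply: le_trans (ler_norm_sum _ _ _) _.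
  by apply: ler_sum => m _; rewrite mxE normrM ler_wpM2r ?Hb.
by exists c => i k; exact: Hc (i, k).
Qed.

Lemma bilinear_norm_bound (R : realFieldType) (K a x y : R) :
  `|a| <= K -> x * (a * y) + (a * y) * x <= K * (x * x + y * y).
Proof.
rewrite ler_norml => /andP[Ka aK].
have e1 : 0 <= (K - a) * ((x + y) * (x + y)) by apply: mulr_ge0; [lra | rewrite -expr2 sqr_ge0].
have e2 : 0 <= (K + a) * ((x - y) * (x - y)) by apply: mulr_ge0; [lra | rewrite -expr2 sqr_ge0].
lra.
Qed.

Lemma mulmx_sqnorm_bound (R : realFieldType) n (M : 'M[R]_n) (K : R) (x : 'cV[R]_n) :
  (forall i k, `|M i k| <= K) ->
  \sum_i (x i 0 * (M *m x) i 0 + (M *m x) i 0 * x i 0)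
    <= K * n%:R * 2 * \sum_i x i 0 * x i 0.
Proof.
move=> MK.
apply: (@le_trans _ _ (\sum_i \sum_k (K * (x i 0 * x i 0) + K * (x k 0 * x k 0)))).
  apply: ler_sum => i _; rewrite mxE mulr_sumr mulr_suml -big_split /=.
  by apply: ler_sum => k _; rewrite -mulrDr; exact: bilinear_norm_bound.
have E i : \sum_(k < n) (K * (x i 0 * x i 0) + K * (x k 0 * x k 0))
    = K * (x i 0 * x i 0) *+ n + \sum_k K * (x k 0 * x k 0).
  by rewrite big_split sumr_const card_ord.
rewrite (eq_bigr _ (fun i _ => E i)) big_split /= sumr_const card_ord sumrMnl.
rewrite -mulrnDl -mulr_natr -!mulr_sumr.
by rewrite le_eqVlt; apply/orP; left; apply/eqP; ring.
Qed.

Section VectorDerivatives.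
Variables (R : realType) (A : set R).

Lemma deriv_within_mulmx m n (M : 'M[R]_(m, n)) (x : R -> 'cV[R]_n) (dx : 'cV[R]_n) t :
  (forall j, deriv_within A (fun s => x s j 0) t (dx j 0)) ->
  forall i, deriv_within A (fun s => (M *m x s) i 0) t ((M *m dx) i 0).
Proof.
move=> Hx i; rewrite mxE.
have -> : (fun s => (M *m x s) i 0) = (fun s => \sum_j M i j * x s j 0).
  by apply/funext => s; rewrite mxE.
by apply: deriv_within_sum => j; exact: deriv_withinZ (Hx j).
Qed.

Lemma deriv_within_pairing n (a g : R -> 'cV[R]_n) (da dg : 'cV[R]_n) t :
  (forall j, deriv_within A (fun s => a s j 0) t (da j 0)) ->
  (forall j, deriv_within A (fun s => g s j 0) t (dg j 0)) ->
  deriv_within A (fun s => pairing (a s) (g s)) t (pairing (a t) dg + pairing da (g t)).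
Proof.
move=> Ha Hg; rewrite /pairing -big_split.
by apply: deriv_within_sum => j; exact: deriv_withinM (Ha j) (Hg j).
Qed.

End VectorDerivatives.

Lemma linear_ode_eq0 (R : realType) n (T K : R) (M : R -> 'M[R]_n) (x dx : R -> 'cV[R]_n) :
  (forall j s, tint T s -> deriv_within (tint T) (fun s => x s j 0) s (dx s j 0)) ->
  (forall s, tint T s -> dx s = M s *m x s) ->
  (forall i k s, tint T s -> `|M s i k| <= K) ->
  x 0 = 0 -> forall t, tint T t -> x t = 0.
Proof.
move=> Hx dxE MK x0 t tt.
pose f s := \sum_i x s i 0 * x s i 0.
have sq_ge0 s i : 0 <= x s i 0 * x s i 0 by rewrite -expr2 sqr_ge0.
have ft : f t = 0.
  apply: (@gronwall_eq0 _ T (K * n%:R * 2) f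
    (fun s => \sum_i (x s i 0 * dx s i 0 + dx s i 0 * x s i 0))) => //.
  - by move=> s _; exact: sumr_ge0.
  - by rewrite /f x0 big1 // => i _; rewrite mxE mul0r.
  - move=> s Ts; apply: deriv_within_sum => i.
    exact: deriv_withinM (Hx i s Ts) (Hx i s Ts).
  - by move=> s Ts; rewrite dxE //; apply: mulmx_sqnorm_bound => i k; exact: MK.
apply/matrixP => i j; rewrite ord1 mxE; apply/eqP.
by rewrite -[_ == 0]orbb -mulf_eq0 (psumr_eq0P (fun i _ => sq_ge0 t i) ft).
Qed.

Section Pairing.
Variable R : comPzRingType.

Lemma pairingDl n (a b g : 'cV[R]_n) : pairing (a + b) g = pairing a g + pairing b g.
Proof. by rewrite /pairing -big_split; apply: eq_bigr => j _; rewrite mxE mulrDl. Qed.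

Lemma pairing0r n (a : 'cV[R]_n) : pairing a 0 = 0.
Proof. by rewrite /pairing big1 // => j _; rewrite mxE mulr0. Qed.

Lemma pairing_trmx m n (M : 'M[R]_(m, n)) (a : 'cV[R]_n) (g : 'cV[R]_m) :
  pairing a (M^T *m g) = pairing (M *m a) g.
Proof.
rewrite /pairing; under eq_bigr do rewrite mxE mulr_sumr.
under [RHS]eq_bigr do rewrite mxE mulr_suml.
rewrite exchange_big /=; apply: eq_bigr => i _; apply: eq_bigr => j _.
by rewrite mxE mulrA (mulrC (a j 0)).
Qed.

Variables (n0 n1 n2 : nat) (D0 : 'M[R]_(n1, n0)) (D1 : 'M[R]_(n2, n1)).
Variables (Iv : 'M[R]_(n1, n2)) (I1v : 'M[R]_(n0, n1)).

Lemma lie1_momentum (v dv : 'cV[R]_n1) (B : 'cV[R]_n0) :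
  dv + Iv *m (D1 *m v) + D0 *m B = 0 ->
  lie1 D0 D1 Iv I1v *m v + dv = D0 *m (I1v *m v - B).
Proof.
move=> mom; have -> : dv = - (Iv *m (D1 *m v) + D0 *m B).
  by apply/eqP; rewrite -addr_eq0 addrA mom.
by rewrite /lie1 mulmxDl mulmxBr -!mulmxA opprD addrA addrK.
Qed.

Lemma bdry_lie1_chain (g : 'cV[R]_n1) : D1 *m D0 = 0 ->
  bdry D0 (lie1_chain D0 D1 Iv I1v *m g) = (I1v *m D0)^T *m bdry D0 g.
Proof.
move=> D1D0; rewrite /bdry /lie1_chain /lie1 mulmxA -trmx_mul mulmxDl -!mulmxA D1D0.
by rewrite mulmx0 addr0 trmx_mul -mulmxA.
Qed.

Lemma pairing_lie1_chain (v dv g : 'cV[R]_n1) (B : 'cV[R]_n0) :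
  dv + Iv *m (D1 *m v) + D0 *m B = 0 ->
  pairing v (lie1_chain D0 D1 Iv I1v *m g) + pairing dv g
    = pairing (I1v *m v - B) (bdry D0 g).
Proof.
by move=> mom; rewrite pairing_trmx -pairingDl (lie1_momentum mom) -pairing_trmx.
Qed.

End Pairing.

Unset Implicit Arguments. Set Strict Implicit.

Theorem theorem3p5 (R : realType) (n0 n1 n2 : nat)
  (D0 : 'M[R]_(n1, n0)) (D1 : 'M[R]_(n2, n1))
  (I : 'cV[R]_n1 -> 'M[R]_(n1, n2))
  (I1 : 'cV[R]_n1 -> 'M[R]_(n0, n1))
  (T : R)
  (v dv : R -> 'cV[R]_n1) (B : R -> 'cV[R]_n0) (gam dgam : R -> 'cV[R]_n1) :
  D1 *m D0 = 0 ->
  (forall (a : R) (u w : 'cV[R]_n1), I1 (a *: u + w) = a *: I1 u + I1 w) ->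
  C1_vec_with_deriv T v dv ->
  C0_vec T B ->
  (forall t, tint T t -> dv t + I (v t) *m (D1 *m v t) + D0 *m B t = 0) ->
  C1_vec_with_deriv T gam dgam ->
  (forall t, tint T t -> dgam t = lie1_chain D0 D1 (I (v t)) (I1 (v t)) *m gam t) ->
  bdry D0 (gam 0) = 0 ->
  forall t, tint T t ->
    deriv_within (tint T) (fun s => pairing (v s) (gam s)) t 0.
Proof.
move=> D1D0 I1_lin Hv _ Hmom Hgam Hdgam bdry0 t tt.
have T0 : 0 <= T by case/andP: tt; exact: le_trans.
pose M s := (I1 (v s) *m D0)^T.
have [K MK] : exists K, forall i k s, tint T s -> `|M s i k| <= K.
  apply: (bounded_linear_image (J := fun u => (I1 u *m D0)^T)).
    by move=> a u w; rewrite I1_lin mulmxDl -scalemxAl linearD linearZ.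
  move=> m; apply: continuous_bounded_tint T0 _.
  exact: deriv_within_continuous_tint (Hv m).1.
have bdry_eq0 : bdry D0 (gam t) = 0.
  apply: (linear_ode_eq0 (x := fun s => bdry D0 (gam s))
            (dx := fun s => bdry D0 (dgam s)) _ _ MK bdry0 tt).
  - by move=> j s Ts; apply: deriv_within_mulmx => k; exact: (Hgam k).1.
  - by move=> s Ts; rewrite Hdgam // bdry_lie1_chain.
have := deriv_within_pairing (fun j => (Hv j).1 t tt) (fun j => (Hgam j).1 t tt).
by rewrite Hdgam // (pairing_lie1_chain _ _ (Hmom t tt)) bdry_eq0 pairing0r.
Qed.
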